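(* Let $\mathcal{C}$ be a permutation class (resp. a polyomino class) and let $\mathcal{M}$ be its canonical $m$-basis. Then $\mathcal{C}=Av_{\mathfrak{S}}(\mathcal{M})$ (resp. $\mathcal{C}=Av_{\mathfrak{P}}(\mathcal{M})$).
   Context: Binary matrices are matrices with entries in $\{0,1\}$; $M'\preccurlyeq M$ (submatrix order) means $M'$ is obtained from $M$ by deleting some rows and/or columns. A permutation $\sigma$ of $\{1,\dots,n\}$ is identified with its permutation matrix $M_\sigma$, where $M_\sigma(i,j)=1$ iff $i=\sigma(j)$ (rows numbered bottom to top); a permutation class is a set of permutations closed under taking patterns (equivalently, closed under taking submatrices that are permutation matrices). A quasi-permutation matrix is a binary matrix with at most one $1$ in each row and each column. A polyomino is a finite edge-connected union of unit cells of $\mathbb{Z}^2$ up to translation, identified with the binary matrix of its minimal bounding rectangle (entry $(i,j)$ equal to $1$ iff the unit square $[j-1,j]\times[i-1,i]$ is a cell, the polyomino placed in the positive quarter plane touching both axes); a polyomino class is a set of polyominoes closed under taking submatrices that are polyominoes. For a set $\mathcal{M}$ of matrices, $Av_{\mathfrak{S}}(\mathcal{M})$ (resp. $Av_{\mathfrak{P}}(\mathcal{M})$) is the set of permutations (resp. polyominoes) with no submatrix in $\mathcal{M}$. For a class $\mathcal{C}$, let $\mathcal{C}^+$ be the set of binary matrices that are submatrices of some element of $\mathcal{C}$. The canonical $m$-basis of a permutation class (resp. polyomino class) $\mathcal{C}$ is the set of quasi-permutation matrices (resp. binary matrices) not in $\mathcal{C}^+$ that are minimal for $\preccurlyeq$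 among quasi-permutation matrices (resp. binary matrices) not in $\mathcal{C}^+$. *)

From mathcomp Require Import all_boot all_algebra.
Set Implicit Arguments. Unset Strict Implicit. Unset Printing Implicit Defensive.

Record bmat := BMat { nrows : nat; ncols : nat; bmx : 'M[bool]_(nrows, ncols) }.

Definition strict_incr m n (f : 'I_m -> 'I_n) : Prop :=
  forall i j : 'I_m, i < j -> f i < f j.

Definition subm (A B : bmat) : Prop :=
  exists (f : 'I_(nrows A) -> 'I_(nrows B)) (g : 'I_(ncols A) -> 'I_(ncols B)),
    [/\ strict_incr f, strict_incr g &
        forall i j, bmx A i j = bmx B (f i) (g j)].

Definition is_perm_mat (A : bmat) : Prop :=
  (forall i, #|[pred j | bmx A i j]| = 1) /\ (forall j, #|[pred i | bmx A i j]| = 1).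

Definition is_quasi_perm (A : bmat) : Prop :=
  (forall i, #|[pred j | bmx A i j]| <= 1) /\ (forall j, #|[pred i | bmx A i j]| <= 1).

Arguments BMat : clear implicits.
Definition cell_adj (A : bmat) : rel ('I_(nrows A) * 'I_(ncols A)) :=
  fun a b => [&& bmx A a.1 a.2, bmx A b.1 b.2 &
    ((a.1 == b.1 :> nat) && ((a.2.+1 == b.2 :> nat) || (b.2.+1 == a.2 :> nat)))
    || ((a.2 == b.2 :> nat) && ((a.1.+1 == b.1 :> nat) || (b.1.+1 == a.1 :> nat)))].

(* Polyomino (as the binary matrix of its minimal bounding rectangle):
   nonempty, every row and column meets a cell (minimality of the bounding
   rectangle), and the cells are edge-connected. *)
Arguments cell_adj : clear implicits.
Definition is_polyomino (A : bmat) : Prop :=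
  [/\ exists i j, bmx A i j,
      forall i, exists j, bmx A i j,
      forall j, exists i, bmx A i j &
      forall a b : 'I_(nrows A) * 'I_(ncols A),
        bmx A a.1 a.2 -> bmx A b.1 b.2 -> connect (cell_adj A) a b].

Definition perm_class (C : bmat -> Prop) : Prop :=
  (forall A, C A -> is_perm_mat A) /\
  (forall A B, C B -> is_perm_mat A -> subm A B -> C A).

Definition poly_class (C : bmat -> Prop) : Prop :=
  (forall A, C A -> is_polyomino A) /\
  (forall A B, C B -> is_polyomino A -> subm A B -> C A).

Definition cplus (C : bmat -> Prop) (A : bmat) : Prop := exists B, C B /\ subm A B.

Definition mbasis_perm (C : bmat -> Prop) (A : bmat) : Prop :=
  [/\ is_quasi_perm A, ~ cplus C A &
      forall A', is_quasi_perm A' -> ~ cplus C A' -> subm A' A -> A' = A].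

Definition mbasis_poly (C : bmat -> Prop) (A : bmat) : Prop :=
  ~ cplus C A /\ (forall A', ~ cplus C A' -> subm A' A -> A' = A).

Definition Av_perm (M : bmat -> Prop) (A : bmat) : Prop :=
  is_perm_mat A /\ forall B, M B -> ~ subm B A.

Definition Av_poly (M : bmat -> Prop) (A : bmat) : Prop :=
  is_polyomino A /\ forall B, M B -> ~ subm B A.

(* A class is closed downwards inside its ambient set S (permutations, or
   polyominoes), so an element of S lies outside the class iff it lies outside
   C^+.  Since the submatrix order is well founded (the size strictly drops
   below any proper submatrix), every matrix outside C^+ lies above a minimal
   one, i.e. above an element of the canonical m-basis. *)

From mathcomp Require Import all_boot all_algebra.
From mathcomp Require Import zify.
From Stdlib Require Import Classical.

Set Implicit Arguments.
Unset Strict Implicit.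
Unset Printing Implicit Defensive.

Section StrictlyIncreasing.

Variables (m n : nat) (f : 'I_m -> 'I_n).
Hypothesis f_incr : strict_incr f.

Lemma strict_incr_inj : injective f.
Proof.
move=> i j fij; apply/val_inj.
by case: (ltngtP i j) => // /f_incr; rewrite fij ltnn.
Qed.

Lemma strict_incr_leq : m <= n.
Proof. by have := leq_card f strict_incr_inj; rewrite !card_ord. Qed.

Lemma strict_incr_ge (i : 'I_m) : i <= f i.
Proof.
case: i => k; elim: k => [//|k IHk] ltkm.
have ltkm' : k < m by apply: ltnW.
have := IHk ltkm'; have := @f_incr (Ordinal ltkm') (Ordinal ltkm) (ltnSn k).
by move=> /=; lia.
Qed.

Lemma strict_incr_rev : strict_incr (fun i => rev_ord (f (rev_ord i))).
Proof.
move=> i j ltij; rewrite /= ltn_sub2lE // ltnS.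
by apply: f_incr; rewrite /= ltn_sub2lE // ltnS.
Qed.

End StrictlyIncreasing.

(* Applying strict_incr_ge to the reversed map bounds f i from above. *)
Lemma strict_incr_self n (f : 'I_n -> 'I_n) : strict_incr f -> f =1 id.
Proof.
move=> f_incr i; apply/val_inj/eqP; rewrite eqn_leq (strict_incr_ge f_incr) andbT.
have := strict_incr_ge (strict_incr_rev f_incr) (rev_ord i).
by rewrite /= rev_ordK; have := ltn_ord (f i); lia.
Qed.

Lemma subm_refl A : subm A A.
Proof. by exists id, id; split. Qed.

Lemma subm_trans A B C : subm A B -> subm B C -> subm A C.
Proof.
case=> f [g [f_incr g_incr eAB]] [f' [g' [f'_incr g'_incr eBC]]].
exists (f' \o f), (g' \o g).
split=> [i j /f_incr/f'_incr | i j /g_incr/g'_incr | i j] //.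
by rewrite eAB eBC.
Qed.

Lemma subm_size A B : subm A B -> nrows A <= nrows B /\ ncols A <= ncols B.
Proof. by case=> f [g [/strict_incr_leq ? /strict_incr_leq ? _]]. Qed.

Lemma subm_same_size A B :
  subm A B -> nrows A = nrows B -> ncols A = ncols B -> A = B.
Proof.
case: A B => [r c MA] [r' c' MB] + /= er ec; subst r' c'.
case=> /= f [g [f_incr g_incr eAB]]; congr BMat; apply/matrixP => i j.
by rewrite eAB (strict_incr_self f_incr) (strict_incr_self g_incr).
Qed.

Lemma subm_proper_size A B :
  subm A B -> A <> B -> nrows A + ncols A < nrows B + ncols B.
Proof.
move=> sAB neAB; have [ler lec] := subm_size sAB.
rewrite ltnNge; apply/negP => leB; apply: neAB; apply: subm_same_size sAB _ _; lia.
Qed.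

Lemma subm_minimal_below (P : bmat -> Prop) A : P A ->
  exists B, [/\ P B, subm B A & forall B', P B' -> subm B' B -> B' = B].
Proof.
have [k] := ubnP (nrows A + ncols A); elim: k A => // k IHk A ltAk PA.
case: (classic (exists B, [/\ P B, subm B A & B <> A])) => [[B [PB sBA neBA]]|noB].
  have ltBk : nrows B + ncols B < k by have := subm_proper_size sBA neBA; lia.
  have [D [PD sDB minD]] := IHk B ltBk PB.
  by exists D; split=> //; apply: subm_trans sDB sBA.
exists A; split=> [//||B PB sBA]; first exact: subm_refl.
by apply: NNPP => neBA; apply: noB; exists B.
Qed.

(* Both perm_class and poly_class unfold to this, with S the ambient set. *)
Definition pattern_class (S C : bmat -> Prop) : Prop :=
  (forall A, C A -> S A) /\ (forall A B, C B -> S A -> subm A B -> C A).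

Lemma pattern_class_avoid (S C M : bmat -> Prop) : pattern_class S C ->
  (forall B, M B -> ~ cplus C B) ->
  (forall A, S A -> ~ cplus C A -> exists2 B, M B & subm B A) ->
  forall A, C A <-> S A /\ forall B, M B -> ~ subm B A.
Proof.
move=> [C_S C_closed] M_excl M_below A; split=> [CA | [SA avoidA]].
  by split=> [|B /M_excl MB sBA]; [exact: C_S | apply: MB; exists A].
apply: NNPP => notCA.
have notCplusA : ~ cplus C A.
  by case=> D [CD sAD]; apply: notCA; exact: C_closed CD SA sAD.
have [B MB sBA] := M_below A SA notCplusA.
exact: avoidA MB sBA.
Qed.

Lemma perm_mat_quasi A : is_perm_mat A -> is_quasi_perm A.
Proof. by case=> rows cols; split=> i; rewrite ?rows ?cols. Qed.

Theorem proposition4 :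
  (forall C : bmat -> Prop, perm_class C ->
     forall A : bmat, C A <-> Av_perm (mbasis_perm C) A) /\
  (forall C : bmat -> Prop, poly_class C ->
     forall A : bmat, C A <-> Av_poly (mbasis_poly C) A).
Proof.
split=> C classC A.
- apply: (pattern_class_avoid classC) => [B [] // | {}A permA notA].
  have [B [[quasiB notB] sBA minB]] :=
    subm_minimal_below (P := fun X => is_quasi_perm X /\ ~ cplus C X)
      (conj (perm_mat_quasi permA) notA).
  by exists B => //; split=> // B' quasiB' notB'; apply: minB.
- apply: (pattern_class_avoid classC) => [B [] // | {}A _ notA].
  have [B [notB sBA minB]] := subm_minimal_below (P := fun X => ~ cplus C X) notA.
  by exists B.
Qed.
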